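(* For all integers $n\geq 1$, \[p^{ed}_{od}(n)-p^{ed}_{od}(n-1)=2D_e(n-1)-D_o(n-1),\] and consequently \[p^{ed}_{od}(n)-p^{ed}_{od}(n-1)\equiv D_o(n-1)\pmod 2.\]
   Context: $\mathcal{P}^{ed}_{od}$ is the set of integer partitions such that: - all parts are distinct; - every odd part is smaller than every even part; - at least one odd part appears. In particular the empty partition is not in $\mathcal{P}^{ed}_{od}$. For $n\ge 0$: - $p^{ed}_{od}(n)$ is the number of partitions of $n$ in $\mathcal{P}^{ed}_{od}$, so $p^{ed}_{od}(0)=0$. - $D_e(n)$ is the number of partitions of $n$ into distinct even parts, with any number of parts including zero, so $D_e(0)=1$. - $D_o(n)$ is the number of partitions of $n$ into distinct odd parts, with $D_o(0)=1$. *)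

From mathcomp Require Import all_boot all_order all_algebra.
Set Implicit Arguments. Unset Strict Implicit. Unset Printing Implicit Defensive.

(* A partition of n into distinct parts is identified with its set of parts:
   a set A of positive integers (each <= n, encoded in 'I_n.+1) whose sum is n. *)
Definition distinct_partitions (n : nat) : {set {set 'I_n.+1}} :=
  [set A : {set 'I_n.+1} | (ord0 \notin A) && ((\sum_(i in A) (i : nat)) == n)].

Definition p_ed_od (n : nat) : nat :=
  #|[set A in distinct_partitions n |
      [exists i in A, odd i] &&
      [forall i in A, forall j in A, (odd i && ~~ odd j) ==> (i < j)]]|.

Definition D_e (n : nat) : nat :=
  #|[set A in distinct_partitions n | [forall i in A, ~~ odd i]]|.

Definition D_o (n : nat) : nat :=
  #|[set A in distinct_partitions n | [forall i in A, odd i]]|.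

From mathcomp Require Import all_boot all_order all_algebra zify.
Set Implicit Arguments. Unset Strict Implicit. Unset Printing Implicit Defensive.

(* Let Q(m) count the partitions of m into distinct parts whose odd parts are
   all smaller than their even parts.  Split
   the partitions counted by p(m+1) according to their largest odd part o:
   - if o = 1, removing the part 1 leaves a partition of m into distinct even
     parts, and this is a bijection (npart_odd_one);
   - if o > 1, replacing o by o - 1 gives a partition counted by Q(m) with an
     even part; the inverse replaces the smallest even part k by k + 1
     (npart_big_odd).
   Hence p(m+1) = D_e(m) + (Q(m) - D_o(m)), while Q(m) = p(m) + D_e(m) by
   splitting on the presence of an odd part.  Partitions are sets of ordinals
   and the statement uses a different ambient type 'I_n.+1 for each n, so all
   counts are first transported to the common type 'I_m.+2 (Widening). *)

Lemma card_inverse (T U : finType) (X : {set T}) (Y : {set U})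
    (f : T -> U) (g : U -> T) :
  {in X, forall x, f x \in Y} -> {in Y, forall y, g y \in X} ->
  {in X, cancel f g} -> {in Y, cancel g f} -> #|X| = #|Y|.
Proof.
move=> fXY gYX fK gK; apply/eqP; rewrite eqn_leq.
rewrite -{1}(card_in_imset (can_in_inj fK)) -{2}(card_in_imset (can_in_inj gK)).
by rewrite !subset_leq_card //; apply/subsetP => _ /imsetP [x xD ->]; auto.
Qed.

Section OrdinalExtrema.
Variable N : nat.
Implicit Type S : {set 'I_N}.

Definition greatest S : option 'I_N := [pick x in S | [forall y in S, y <= x]].
Definition least S : option 'I_N := [pick x in S | [forall y in S, x <= y]].

Lemma greatestE S x :
  x \in S -> (forall y, y \in S -> y <= x) -> greatest S = Some x.
Proof.
move=> xS xmax; rewrite /greatest; case: pickP => [y /andP [yS /forall_inP ymax] | /=].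
  by congr Some; apply/val_inj/eqP; rewrite eqn_leq ymax // xmax.
by move=> /(_ x); rewrite xS => /negbT /negP; case; apply/forall_inP.
Qed.

Lemma leastE S x :
  x \in S -> (forall y, y \in S -> x <= y) -> least S = Some x.
Proof.
move=> xS xmin; rewrite /least; case: pickP => [y /andP [yS /forall_inP ymin] | /=].
  by congr Some; apply/val_inj/eqP; rewrite eqn_leq ymin // xmin.
by move=> /(_ x); rewrite xS => /negbT /negP; case; apply/forall_inP.
Qed.

Lemma exists_greatest S x0 :
  x0 \in S -> exists2 x, x \in S & forall y, y \in S -> y <= x.
Proof.
by move=> x0S; case: (arg_maxnP (fun i : 'I_N => i : nat) x0S) => x; exists x.
Qed.

Lemma exists_least S x0 :
  x0 \in S -> exists2 x, x \in S & forall y, y \in S -> x <= y.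
Proof.
by move=> x0S; case: (arg_minnP (fun i : 'I_N => i : nat) x0S) => x; exists x.
Qed.

End OrdinalExtrema.

Definition is_dpart (N n : nat) (A : {set 'I_N.+1}) : bool :=
  (ord0 \notin A) && (\sum_(i in A) (i : nat) == n).

Section PartShapes.
Variable N : nat.
Implicit Type A : {set 'I_N}.

Definition odd_before_even A : bool :=
  [forall i in A, forall j in A, (odd i && ~~ odd j) ==> (i < j)].
Definition has_odd A : bool := [exists i in A, odd i].
Definition all_odd A : bool := [forall i in A, odd i].
Definition all_even A : bool := [forall i in A, ~~ odd i].

Lemma odd_before_evenP A :
  reflect (forall i j, i \in A -> j \in A -> odd i -> ~~ odd j -> i < j)
          (odd_before_even A).
Proof.
apply: (iffP forall_inP) => [H i j iA jA oi ej | H i iA].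
  by have /forall_inP /(_ j jA) := H i iA; rewrite oi ej.
by apply/forall_inP => j jA; apply/implyP => /andP []; exact: H.
Qed.

Lemma all_even_odd_before_even A : all_even A -> odd_before_even A.
Proof.
move=> /forall_inP evA; apply/odd_before_evenP => i j iA _ oi _.
by have := evA i iA; rewrite oi.
Qed.

Lemma all_odd_odd_before_even A : all_odd A -> odd_before_even A.
Proof.
move=> /forall_inP odA; apply/odd_before_evenP => i j _ jA _ ej.
by have := odA j jA; rewrite (negPf ej).
Qed.

Lemma negb_has_odd A : ~~ has_odd A = all_even A.
Proof. exact/exists_inPn/forall_inP. Qed.

Lemma part_le_sum A i : i \in A -> i <= \sum_(j in A) (j : nat).
Proof. by move=> iA; rewrite (bigD1 i) //= leq_addr. Qed.

End PartShapes.
Arguments odd_before_even {N} A.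
Arguments has_odd {N} A.
Arguments all_odd {N} A.
Arguments all_even {N} A.

Section Widening.
Variables (n N : nat) (le_nN : n <= N).
Local Notation wid := (@widen_ord n.+1 N.+1 le_nN).

Definition widen_set (A : {set 'I_n.+1}) : {set 'I_N.+1} :=
  wid @: A.

Lemma widen_inj : injective wid.
Proof. by move=> i j /(congr1 val) /= /val_inj. Qed.

Lemma mem_widen_set A i : (wid i \in widen_set A) = (i \in A).
Proof. exact: (mem_imset _ _ widen_inj). Qed.

Lemma widen_set_exists A (p : nat -> bool) :
  [exists i in widen_set A, p i] = [exists i in A, p i].
Proof.
apply/exists_inP/exists_inP => [[_ /imsetP [i iA ->] pi] | [i iA pi]].
  by exists i.
by exists (wid i); rewrite ?mem_widen_set.
Qed.

Lemma widen_set_forall A (p : nat -> bool) :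
  [forall i in widen_set A, p i] = [forall i in A, p i].
Proof.
apply/forall_inP/forall_inP => [H i iA | H _ /imsetP [i iA ->]].
  by have := H (wid i); rewrite mem_widen_set; apply.
exact: H.
Qed.

Lemma widen_set_odd_before_even A :
  odd_before_even (widen_set A) = odd_before_even A.
Proof.
pose r i j := (odd i && ~~ odd j) ==> (i < j).
have inner (i : nat) : [forall j in widen_set A, r i j] = [forall j in A, r i j].
  exact: (widen_set_forall A (r i)).
rewrite /odd_before_even -/r; under eq_forallb do rewrite inner.
exact: (widen_set_forall A (fun i => [forall j in A, r i j])).
Qed.

Lemma widen_set_is_dpart A : is_dpart n (widen_set A) = is_dpart n A.
Proof.
rewrite /is_dpart; have -> : (ord0 : 'I_N.+1) = wid ord0 by apply: val_inj.
by rewrite mem_widen_set big_imset //; move=> i j _ _ /widen_inj.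
Qed.

(* A partition of n in 'I_N.+1 only uses parts <= n, so it is a widened set. *)
Lemma widen_setK B : is_dpart n B ->
  widen_set [set i | wid i \in B] = B.
Proof.
move=> /andP [_ /eqP sumB]; apply/setP => x.
apply/imsetP/idP => [[i] | xB]; first by rewrite inE => ? ->.
have x_le_n : x < n.+1 by rewrite ltnS -sumB part_le_sum.
have wx : wid (Ordinal x_le_n) = x by apply: val_inj.
by exists (Ordinal x_le_n); rewrite // inE wx.
Qed.

Lemma card_widen_parts (P : {set 'I_n.+1} -> bool) (P' : {set 'I_N.+1} -> bool) :
  (forall A, P' (widen_set A) = P A) ->
  #|[set A | is_dpart n A && P A]| = #|[set B | is_dpart n B && P' B]|.
Proof.
move=> PP'; apply: (card_inverse (f := widen_set)
  (g := fun B => [set i | wid i \in B])).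
- by move=> A; rewrite !inE widen_set_is_dpart PP'.
- move=> B; rewrite !inE => /andP [dB PB].
  by rewrite -PP' -widen_set_is_dpart (widen_setK dB) dB.
- by move=> A _; apply/setP => i; rewrite inE mem_widen_set.
- by move=> B; rewrite inE => /andP [dB _]; apply: widen_setK.
Qed.

End Widening.

Lemma ltn_same_parity a b : a < b -> odd a = odd b -> a.+1 < b.
Proof.
move=> ab pab; rewrite ltn_neqAle ab andbT.
by apply/eqP => eb; move: pab; rewrite -eb /=; case: (odd a).
Qed.

Section ShiftBijections.
Variable m : nat.
Local Notation T := 'I_m.+2.
Implicit Types A B : {set T}.

(* The number of partitions of n with a given shape; the ambient type 'I_m.+2
   holds all parts of partitions of m and of m + 1. *)
Definition npart n (P : {set T} -> bool) : nat :=
  #|[set A | is_dpart n A && P A]|.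

Lemma npart_split n P (q : {set T} -> bool) :
  npart n P = npart n (fun A => P A && q A) + npart n (fun A => P A && ~~ q A).
Proof.
rewrite /npart -(cardID [set A | q A] [set A | is_dpart n A && P A]).
by congr (_ + _); apply: eq_card => A; rewrite !inE;
  case: (is_dpart n A) (P A) (q A) => [] [] [].
Qed.

Lemma eq_npart n P Q :
  (forall A, is_dpart n A -> P A = Q A) -> npart n P = npart n Q.
Proof.
move=> PQ; apply: eq_card => A; rewrite !inE.
by case: (boolP (is_dpart n A)) => // /PQ ->.
Qed.

Lemma even_part_gt1 A j : ord0 \notin A -> j \in A -> ~~ odd j -> 1 < j.
Proof.
move=> A0 jA; have : j != ord0 by apply: contraNneq A0 => <-.
by rewrite -val_eqE /=; case: (nat_of_ord j) => [|[|]].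
Qed.

Definition one : T := Ordinal (isT : 1 < m.+2).

Definition has_big_odd A : bool := [exists i in A, odd i && (1 < i)].

Lemma odd_part_one A i : ~~ has_big_odd A -> i \in A -> odd i -> i = one.
Proof.
move=> /exists_inPn noBig iA oi; apply: val_inj => /=.
by have := noBig i iA; rewrite oi /=; case: (nat_of_ord i) oi => [|[|]].
Qed.

Lemma npart_odd_one :
  npart m.+1 (fun A => [&& odd_before_even A, has_odd A & ~~ has_big_odd A])
  = npart m all_even.
Proof.
apply: (card_inverse (f := fun A => A :\ one) (g := fun B => one |: B)).
- move=> A; rewrite !inE => /andP [/andP [A0 /eqP sumA]].
  case/and3P=> _ /exists_inP [i iA oi] noBig.
  have oneA : one \in A by rewrite -(odd_part_one noBig iA oi).
  rewrite /is_dpart in_setD1 negb_and A0 orbT /=; apply/andP; split.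
    by move: sumA; rewrite (big_setD1 one oneA) /= add1n => -[->].
  apply/forall_inP => j; rewrite in_setD1 => /andP [j1 jA].
  by apply: contra j1 => oj; rewrite (odd_part_one noBig jA oj).
- move=> B; rewrite !inE => /andP [/andP [B0 /eqP sumB] /forall_inP evB].
  have oneB : one \notin B by apply/negP => /evB.
  rewrite /is_dpart in_setU1 negb_or B0 andbT big_setU1 //= sumB add1n eqxx /=.
  apply/and3P; split.
  + apply/odd_before_evenP => i j iA jA oi ej.
    have -> : i = one by case/setU1P: iA => // /evB; rewrite oi.
    case/setU1P: jA => [jone | jB]; first by rewrite jone in ej.
    exact: even_part_gt1 B0 jB ej.
  + by apply/exists_inP; exists one; rewrite ?setU11.
  + by apply/exists_inPn => i; case/setU1P=> [-> // | /evB /negPf ->].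
- move=> A; rewrite inE => /andP [_ /and3P [_ /exists_inP [i iA oi] noBig]].
  by rewrite setD1K // -(odd_part_one noBig iA oi).
- move=> B; rewrite inE => /andP [_ /forall_inP evB].
  by rewrite setU1K //; apply/negP => /evB.
Qed.

Definition pred_part (o : T) : T := Ordinal (leq_ltn_trans (leq_pred o) (ltn_ord o)).
Definition succ_part (k : T) : T := inord k.+1.

Definition lower A : {set T} :=
  if greatest [set i in A | odd i] is Some o then pred_part o |: (A :\ o) else A.
Definition raise B : {set T} :=
  if least [set j in B | ~~ odd j] is Some k then succ_part k |: (B :\ k) else B.

Lemma lowerE A o : o \in A -> odd o -> (forall i, i \in A -> odd i -> i <= o) ->
  lower A = pred_part o |: (A :\ o).
Proof.
move=> oA oo omax; rewrite /lower (greatestE (x := o)) ?inE ?oA //.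
by move=> i; rewrite inE => /andP []; exact: omax.
Qed.

Lemma raiseE B k : k \in B -> ~~ odd k -> (forall j, j \in B -> ~~ odd j -> k <= j) ->
  raise B = succ_part k |: (B :\ k).
Proof.
move=> kB ek kmin; rewrite /raise (leastE (x := k)) ?inE ?kB //.
by move=> j; rewrite inE => /andP []; exact: kmin.
Qed.

Lemma odd_pred_part (o : T) : odd o -> ~~ odd (pred_part o).
Proof. by rewrite /pred_part /=; case: (nat_of_ord o). Qed.

Lemma lower_spec A : odd_before_even A -> has_big_odd A ->
  exists2 o, [/\ o \in A, odd o, 1 < o, pred_part o \notin A
              & forall i, i \in A -> odd i -> i <= o]
    & lower A = pred_part o |: (A :\ o).
Proof.
move=> /odd_before_evenP oeA /exists_inP [i0 i0A /andP [oi0 i0_gt1]].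
have [|o] := exists_greatest (x0 := i0) (S := [set i in A | odd i]).
  by rewrite inE i0A.
rewrite inE => /andP [oA oo] omaxS.
have omax i : i \in A -> odd i -> i <= o by move=> iA oi; rewrite omaxS ?inE ?iA.
exists o; last exact: lowerE.
split=> //; first exact: leq_trans i0_gt1 (omax _ i0A oi0).
apply/negP => pA; have := oeA o _ oA pA oo (odd_pred_part oo).
by rewrite /pred_part /= ltnNge leq_pred.
Qed.

Lemma raise_spec B : is_dpart m B -> odd_before_even B -> ~~ all_odd B ->
  exists2 k, [/\ k \in B, ~~ odd k, succ_part k = k.+1 :> nat,
              succ_part k \notin B & forall j, j \in B -> ~~ odd j -> k <= j]
    & raise B = succ_part k |: (B :\ k).
Proof.
move=> /andP [B0 /eqP sumB] /odd_before_evenP oeB /forall_inPn [j0 j0B ej0].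
have [|k] := exists_least (x0 := j0) (S := [set j in B | ~~ odd j]).
  by rewrite inE j0B.
rewrite inE => /andP [kB ek] kminS.
have kmin j : j \in B -> ~~ odd j -> k <= j by move=> jB ej; rewrite kminS ?inE ?jB.
have val_a : succ_part k = k.+1 :> nat.
  by apply: inordK; have := part_le_sum kB; rewrite sumB.
exists k; last exact: raiseE.
split=> //; apply/negP => aB; have := oeB _ _ aB kB.
by rewrite val_a /= ek ltnNge leqnSn => /(_ isT isT).
Qed.

Lemma lower_in A : is_dpart m.+1 A -> odd_before_even A -> has_big_odd A ->
  is_dpart m (lower A) && (odd_before_even (lower A) && ~~ all_odd (lower A)).
Proof.
move=> /andP [A0 /eqP sumA] oeA bigA.
have [o [oA oo o_gt1 pA omax] ->] := lower_spec oeA bigA.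
move/odd_before_evenP: oeA => oeA.
have ep := odd_pred_part oo; set p := pred_part o in pA ep *.
have pAo : p \notin A :\ o by rewrite in_setD1 (negPf pA) andbF.
apply/and3P; split.
- rewrite /is_dpart in_setU1 in_setD1 negb_or negb_and A0 orbT !andbT.
  rewrite big_setU1 //= -val_eqE /=; move: sumA; rewrite (big_setD1 o oA) /=.
  by lia.
- apply/odd_before_evenP => i j iP jP oi ej.
  have [io iA] : i != o /\ i \in A.
    by case/setU1P: iP => [ip | /setD1P //]; rewrite ip (negPf ep) in oi.
  have lt_io : i < o by rewrite ltn_neqAle val_eqE io omax.
  case/setU1P: jP => [-> | /setD1P [_ jA]]; last exact: oeA.
  have := ltn_same_parity lt_io (etrans oi (esym oo)).
  by rewrite /p /pred_part /=; lia.
- by apply/negP => /forall_inP /(_ p (setU11 _ _)); apply/negP.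
Qed.

Lemma raise_in B : is_dpart m B -> odd_before_even B -> ~~ all_odd B ->
  is_dpart m.+1 (raise B) &&
  [&& odd_before_even (raise B), has_odd (raise B) & has_big_odd (raise B)].
Proof.
move=> dB oeB nB; have [k [kB ek val_a aB kmin] ->] := raise_spec dB oeB nB.
move/odd_before_evenP: oeB => oeB.
case/andP: dB => B0 /eqP sumB; have k_gt1 := even_part_gt1 B0 kB ek.
set a := succ_part k in val_a aB *.
have oa : odd a by rewrite val_a /= ek.
have aBk : a \notin B :\ k by rewrite in_setD1 (negPf aB) andbF.
apply/andP; split.
  rewrite /is_dpart in_setU1 in_setD1 negb_or negb_and B0 orbT !andbT.
  rewrite big_setU1 //= -val_eqE /= val_a; move: sumB; rewrite (big_setD1 k kB) /=.
  by lia.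
apply/and3P; split.
- apply/odd_before_evenP => i j iP jP oi ej.
  have [jk jB] : j != k /\ j \in B.
    by case/setU1P: jP => [ja | /setD1P //]; rewrite ja oa in ej.
  have lt_kj : k < j by rewrite ltn_neqAle eq_sym val_eqE jk kmin.
  case/setU1P: iP => [-> | /setD1P [_ iB]]; last exact: oeB.
  by rewrite val_a ltn_same_parity // (negPf ek) (negPf ej).
- by apply/exists_inP; exists a; rewrite ?setU11.
- by apply/exists_inP; exists a; rewrite ?setU11 // oa val_a ltnW.
Qed.

Lemma raiseK A : odd_before_even A -> has_big_odd A -> raise (lower A) = A.
Proof.
move=> oeA bigA; have [o [oA oo o_gt1 pA _] ->] := lower_spec oeA bigA.
have pAo : pred_part o \notin A :\ o by rewrite in_setD1 (negPf pA) andbF.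
rewrite (raiseE (k := pred_part o)) ?setU11 ?odd_pred_part // => [|j].
  have -> : succ_part (pred_part o) = o.
    by apply: val_inj; rewrite /succ_part /pred_part /= prednK ?inordK // ltnW.
  by rewrite setU1K // setD1K.
case/setU1P=> [-> // | /setD1P [_ jA] ej].
have := elimT (odd_before_evenP A) oeA o j oA jA oo ej.
by rewrite /pred_part /=; lia.
Qed.

Lemma lowerK B : is_dpart m B -> odd_before_even B -> ~~ all_odd B ->
  lower (raise B) = B.
Proof.
move=> dB oeB nB; have [k [kB ek val_a aB _] ->] := raise_spec dB oeB nB.
have aBk : succ_part k \notin B :\ k by rewrite in_setD1 (negPf aB) andbF.
have oa : odd (succ_part k) by rewrite val_a /= ek.
rewrite (lowerE (o := succ_part k)) ?setU11 // => [|i].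
  have -> : pred_part (succ_part k) = k by apply: val_inj; rewrite /pred_part /= val_a.
  by rewrite setU1K // setD1K.
case/setU1P=> [-> // | /setD1P [_ iB] oi].
have := elimT (odd_before_evenP B) oeB i k iB kB oi ek.
by rewrite val_a => /ltnW /leqW.
Qed.

Lemma npart_big_odd :
  npart m.+1 (fun A => [&& odd_before_even A, has_odd A & has_big_odd A])
  = npart m (fun B => odd_before_even B && ~~ all_odd B).
Proof.
apply: (card_inverse (f := lower) (g := raise)).
- by move=> A; rewrite !inE => /andP [dA /and3P [oeA _ bigA]]; apply: lower_in.
- by move=> B; rewrite !inE => /and3P [dB oeB nB]; apply: raise_in.
- by move=> A; rewrite inE => /andP [_ /and3P [oeA _ bigA]]; apply: raiseK.
- by move=> B; rewrite inE => /and3P [dB oeB nB]; apply: lowerK.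
Qed.

End ShiftBijections.

Lemma npart_widen m (P : {set 'I_m.+1} -> bool) (P' : {set 'I_m.+2} -> bool) :
  (forall A, P' (widen_set (leqnSn m) A) = P A) ->
  #|[set A in distinct_partitions m | P A]| = npart m P'.
Proof.
move=> PP'; rewrite /npart -(card_widen_parts PP').
by apply: eq_card => A; rewrite !inE.
Qed.

Lemma p_ed_od_npart m :
  p_ed_od m = npart m (fun A : {set 'I_m.+2} => has_odd A && odd_before_even A).
Proof.
apply: npart_widen => A.
by rewrite /has_odd widen_set_exists widen_set_odd_before_even.
Qed.

Lemma p_ed_od_succ_npart m :
  p_ed_od m.+1 = npart m.+1 (fun A : {set 'I_m.+2} => has_odd A && odd_before_even A).
Proof. by apply: eq_card => A; rewrite !inE. Qed.

Lemma D_e_npart m : D_e m = npart m (@all_even m.+2).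
Proof.
by apply: npart_widen => A; apply: (widen_set_forall _ A (fun k => ~~ odd k)).
Qed.

Lemma D_o_npart m : D_o m = npart m (@all_odd m.+2).
Proof. by apply: npart_widen => A; apply: (widen_set_forall _ A odd). Qed.

Lemma shift_identity m : p_ed_od m.+1 + D_o m = p_ed_od m + 2 * D_e m.
Proof.
pose Q := npart m (@odd_before_even m.+2).
pose R := npart m (fun B : {set 'I_m.+2} => odd_before_even B && ~~ all_odd B).
have Psucc : p_ed_od m.+1 = D_e m + R.
  rewrite p_ed_od_succ_npart (npart_split _ _ (@has_big_odd m)).
  rewrite D_e_npart -npart_odd_one /R -npart_big_odd addnC.
  by congr (_ + _); apply: eq_npart => A _; rewrite [has_odd A && _]andbC andbA.
have Q_by_odd : Q = p_ed_od m + D_e m.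
  rewrite /Q (npart_split _ _ has_odd) p_ed_od_npart D_e_npart.
  congr (_ + _); apply: eq_npart => A _; first by rewrite andbC.
  rewrite negb_has_odd andbC; case: (boolP (all_even A)) => //=.
  exact: all_even_odd_before_even.
have Q_by_all_odd : Q = R + D_o m.
  rewrite /Q (npart_split _ _ all_odd) D_o_npart addnC.
  congr (_ + _); apply: eq_npart => A _.
  by case: (boolP (all_odd A)) => [/all_odd_odd_before_even -> | _];
    rewrite ?andbF.
lia.
Qed.

Import GRing.Theory Num.Theory.
Local Open Scope ring_scope.

Theorem mainTheorem5 (n : nat) (hn : (1 <= n)%N) :
  ((p_ed_od n)%:Z - (p_ed_od n.-1)%:Z = 2 * (D_e n.-1)%:Z - (D_o n.-1)%:Z) /\
  (p_ed_od n)%:Z - (p_ed_od n.-1)%:Z = (D_o n.-1)%:Z %[mod 2]%Z.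
Proof.
case: n hn => // m _ /=.
have identity := shift_identity m.
have diff : (p_ed_od m.+1)%:Z - (p_ed_od m)%:Z = 2 * (D_e m)%:Z - (D_o m)%:Z by lia.
split=> //; rewrite diff.
have -> : 2 * (D_e m)%:Z - (D_o m)%:Z = ((D_e m)%:Z - (D_o m)%:Z) * 2 + (D_o m)%:Z by lia.
exact: modzMDl.
Qed.
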